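(* Consider the center of mass problem in $\mathbb{R}^d$ ($d\ge 1$) where object $i$ has weight $w_i>0$ and its own maximum speed $v_i>0$. There is an absolute constant $C$ and, for every choice of weights and speeds, a fixed query sequence (depending only on the $w_i$ and $v_i$, not on the trajectories) whose measure is at most $C\log n\cdot \mathrm{OPT}(I)$ on every instance $I$ with $n\ge 2$ objects and these weights and speeds. (Explicitly, ordering objects so that $v_1w_1\ge\dots\ge v_nw_n$ and grouping object $i$ into group $\lfloor\log_2 i\rfloor+1$, the strategy that cycles through the groups and, within each group, cycles through its members achieves ratio at most $3(\lfloor\log_2 n\rfloor+1)$.)
   Context: Setting. There are $n\ge 2$ objects in $\mathbb{R}^d$; object $i$ follows a trajectory $p_i:[0,\infty)\to\mathbb{R}^d$ with $|p_i(t)-p_i(s)|\le v_i|t-s|$ for all $s,t$, where $v_i>0$ is a known speed bound for object $i$. The initial positions $p_i(0)$ are known. A query strategy queries one object at each time $t=1,2,3,\dots$; querying object $i$ at time $t$ reveals $p_i(t)$. For $t\ge 0$ let $\tau_i(t)$ be the last time $\le t$ at which object $i$ was queried (or $0$ if never). The uncertainty region of object $i$ at time $t$ is the closed ball $U_i(t)$ of radius $v_i(t-\tau_i(t))$ centered at $p_i(\tau_i(t))$. For a center function $f$ mapping an $n$-tuple of points to a point, the uncertainty region of the center at time $t$ is $\{f(q_1,\dots,q_n): q_i\in U_i(t)\}$. The size of a set is its diameter. The measure of a strategy on an instance is the supremum over $t\in\{1,2,\dots\}$ of the size of the center's uncertainty region at time $t$ (just after the query at time $t$). The optimal measure $\mathrm{OPT}(I)$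 of an instance $I$ is the infimum of the measure over all query sequences, which may be chosen with full knowledge of the trajectories. The center function is the center of mass: $f(q_1,\dots,q_n)=\frac{1}{W}\sum_i w_iq_i$ with $W=\sum_i w_i$. *)

From HB Require Import structures.
From mathcomp Require Import all_boot all_order all_algebra.
From mathcomp Require Import all_classical all_reals all_analysis.
Set Implicit Arguments. Unset Strict Implicit. Unset Printing Implicit Defensive.
Import Order.TTheory GRing.Theory Num.Theory.
Local Open Scope classical_set_scope.
Local Open Scope ring_scope.

Section Defs.
Variable R : realType.

Definition enorm (d : nat) (x : 'rV[R]_d) : R :=
  Num.sqrt (\sum_(j < d) (x ord0 j) ^+ 2).
Definition edist (d : nat) (x y : 'rV[R]_d) : R := enorm (x - y).

Definition cball (d : nat) (c : 'rV[R]_d) (r : R) : set 'rV[R]_d :=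
  [set y | edist y c <= r].

Definition diam (d : nat) (S : set 'rV[R]_d) : \bar R :=
  ereal_sup [set (edist x y)%:E | x in S & y in S].

Definition speed_bounded (d : nat) (pi : R -> 'rV[R]_d) (vi : R) : Prop :=
  forall s t, 0 <= s -> 0 <= t -> edist (pi t) (pi s) <= vi * `|t - s|.

(* Query sequence: at each time t = 1,2,... the object q t is queried
   (q 0 is irrelevant). last_query q i t = last time <= t at which i was
   queried, or 0 if never. *)
Fixpoint last_query (n : nat) (q : nat -> 'I_n) (i : 'I_n) (t : nat) : nat :=
  match t with
  | 0 => 0
  | t'.+1 => if q t'.+1 == i then t'.+1 else last_query q i t'
  end.

Definition unc_region (d n : nat) (v : 'I_n -> R) (p : 'I_n -> R -> 'rV[R]_d)
  (q : nat -> 'I_n) (i : 'I_n) (t : nat) : set 'rV[R]_d :=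
  let tau := last_query q i t in
  cball (p i tau%:R) (v i * (t%:R - tau%:R)).

Definition center_of_mass (d n : nat) (w : 'I_n -> R) (x : 'I_n -> 'rV[R]_d)
  : 'rV[R]_d :=
  (\sum_(i < n) w i)^-1 *: \sum_(i < n) w i *: x i.

Definition center_region (d n : nat) (w v : 'I_n -> R)
  (p : 'I_n -> R -> 'rV[R]_d) (q : nat -> 'I_n) (t : nat) : set 'rV[R]_d :=
  [set center_of_mass w x | x in
     [set x : 'I_n -> 'rV[R]_d | forall i, unc_region v p q i t (x i)]].

Definition measure_of (d n : nat) (w v : 'I_n -> R)
  (p : 'I_n -> R -> 'rV[R]_d) (q : nat -> 'I_n) : \bar R :=
  ereal_sup [set diam (center_region w v p q t) | t in [set t : nat | (1 <= t)%N]].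

Definition OPT (d n : nat) (w v : 'I_n -> R) (p : 'I_n -> R -> 'rV[R]_d)
  : \bar R :=
  ereal_inf [set measure_of w v p q | q in [set: nat -> 'I_n]].

End Defs.

(* Write age_t(i) = t - tau_i(t).  The center's uncertainty region is a
   weighted average of balls, so its diameter is exactly (2 / W) load(t),
   load(t) = sum_i w_i v_i age_t(i) (W = sum_i w_i): the triangle inequality
   gives one bound, moving every object to antipodal points of its ball gives
   the other.  Hence the measure of a strategy is sup_{t >= 1} (2 / W) load(t),
   whatever the trajectories.

   At time n the objects younger than n
   have pairwise distinct ages, so at most age_n(i) objects are younger than
   i; a rearrangement inequality for tournaments then gives
   load(n) >= sum_i w_i v_i rank(i), where rank orders the objects by
   decreasing w_i v_i.  Also some load(t) exceeds the weight of the object of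
   rank 0.  Together: OPT >= (2 / W) K / 3, K = sum_i w_i v_i (rank(i) + 1).

   Put object i in group floor(log2 (rank(i) + 1)); there are
   m = floor(log2 n) + 1 groups and group k has at most 2^k members, so when
   the schedule cycles through the groups and within each group through its
   members, object i never has age above m (rank(i) + 1); the measure is
   at most (2 / W) m K = 3 m ((2 / W) K / 3) and 3 m <= (6 / ln 2) ln n. *)

From Pilot Require Import Defs.
From HB Require Import structures.
From mathcomp Require Import all_boot all_order all_algebra.
From mathcomp Require Import all_classical all_reals all_analysis.
From mathcomp Require Import ring lra zify.
Import Order.TTheory GRing.Theory Num.Theory.
Set Implicit Arguments. Unset Strict Implicit. Unset Printing Implicit Defensive.
Local Open Scope ring_scope.

Section EuclideanNorm.
Variable R : realType.

(* Cauchy-Schwarz, via Lagrange's identity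
   sum_{i,j} (x_i y_j - x_j y_i)^2 = 2 (|x|^2 |y|^2 - <x,y>^2). *)
Lemma cauchy_schwarz (d : nat) (x y : 'I_d -> R) :
  (\sum_j x j * y j) ^+ 2 <= (\sum_j x j ^+ 2) * (\sum_j y j ^+ 2).
Proof.
have lagrange : \sum_i \sum_j (x i * y j - x j * y i) ^+ 2 =
    2 * ((\sum_j x j ^+ 2) * (\sum_j y j ^+ 2) - (\sum_j x j * y j) ^+ 2).
  have expand : \sum_i \sum_j (x i * y j - x j * y i) ^+ 2 =
      \sum_i \sum_j (x i ^+ 2 * y j ^+ 2) + \sum_i \sum_j (x j ^+ 2 * y i ^+ 2)
      - 2 * \sum_i \sum_j (x i * y i * (x j * y j)).
    rewrite mulr_sumr -!big_split /= -sumrB; apply: eq_bigr => i _.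
    rewrite mulr_sumr -!big_split /= -sumrB; apply: eq_bigr => j _.
    ring.
  rewrite expand [X in _ + X - _]exchange_big /=.
  have -> : \sum_i \sum_j (x i ^+ 2 * y j ^+ 2) =
      (\sum_j x j ^+ 2) * (\sum_j y j ^+ 2).
    by rewrite mulr_suml; apply: eq_bigr => i _; rewrite mulr_sumr.
  have -> : \sum_i \sum_j (x i * y i * (x j * y j)) = (\sum_j x j * y j) ^+ 2.
    by rewrite expr2 mulr_suml; apply: eq_bigr => i _; rewrite mulr_sumr.
  ring.
have : 0 <= \sum_i \sum_j (x i * y j - x j * y i) ^+ 2.
  by apply: sumr_ge0 => i _; apply: sumr_ge0 => j _; apply: sqr_ge0.
rewrite lagrange -subr_ge0; nra.
Qed.

Lemma enormZ d (k : R) (x : 'rV[R]_d) : enorm (k *: x) = `|k| * enorm x.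
Proof.
rewrite /enorm.
have -> : \sum_(j < d) (k *: x) ord0 j ^+ 2 = k ^+ 2 * \sum_(j < d) x ord0 j ^+ 2.
  by rewrite mulr_sumr; apply: eq_bigr => j _; rewrite mxE exprMn.
by rewrite sqrtrM ?sqr_ge0 // sqrtr_sqr.
Qed.

Lemma enormN d (x : 'rV[R]_d) : enorm (- x) = enorm x.
Proof. by rewrite -scaleN1r enormZ normrN normr1 mul1r. Qed.

Lemma enorm0 d : enorm (0 : 'rV[R]_d) = 0.
Proof. by rewrite -(scale0r 0) enormZ normr0 mul0r. Qed.

Lemma enormD d (x y : 'rV[R]_d) : enorm (x + y) <= enorm x + enorm y.
Proof.
rewrite /enorm.
set X := \sum_j x ord0 j ^+ 2; set Y := \sum_j y ord0 j ^+ 2.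
set P := \sum_j x ord0 j * y ord0 j.
have X0 : 0 <= X by apply: sumr_ge0 => j _; apply: sqr_ge0.
have Y0 : 0 <= Y by apply: sumr_ge0 => j _; apply: sqr_ge0.
have PXY : P <= Num.sqrt X * Num.sqrt Y.
  apply: le_trans (ler_norm P) _; rewrite -sqrtr_sqr -sqrtrM //.
  by rewrite ler_sqrt ?mulr_ge0 //; apply: cauchy_schwarz.
have -> : \sum_j (x + y) ord0 j ^+ 2 = X + 2 * P + Y.
  rewrite /X /Y /P mulr_sumr -!big_split /=; apply: eq_bigr => j _.
  by rewrite mxE; ring.
have sX := sqrtr_ge0 X; have sY := sqrtr_ge0 Y.
rewrite -(ger0_norm (addr_ge0 sX sY)) -sqrtr_sqr ler_sqrt ?sqr_ge0 //.
have hX := sqr_sqrtr X0; have hY := sqr_sqrtr Y0.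
rewrite expr2 in hX hY; nra.
Qed.

Lemma enorm_sum d (I : finType) (f : I -> 'rV[R]_d) :
  enorm (\sum_i f i) <= \sum_i enorm (f i).
Proof.
apply: (big_ind2 (fun a b => enorm a <= b)) => //; first by rewrite enorm0.
by move=> a b c e ab ce; apply: le_trans (enormD a c) _; apply: lerD.
Qed.

Lemma enormB_cball d (c x y : 'rV[R]_d) (r : R) :
  cball c r x -> cball c r y -> enorm (x - y) <= r + r.
Proof.
move=> xc yc; have -> : x - y = (x - c) + - (y - c) by rewrite opprB addrA subrK.
by apply: le_trans (enormD _ _) _; rewrite enormN; apply: lerD.
Qed.

Lemma exists_unit_vector d : (0 < d)%N -> exists e : 'rV[R]_d, enorm e = 1.
Proof.
move=> d_gt0; pose j0 : 'I_d := Ordinal d_gt0.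
exists (\row_j (j == j0)%:R); rewrite /enorm (bigD1 j0) //= big1 ?addr0.
  by rewrite mxE eqxx expr1n sqrtr1.
by move=> j /negPf j_neq; rewrite mxE j_neq expr0n.
Qed.

End EuclideanNorm.

Section Ages.
Variables (n : nat) (q : nat -> 'I_n).

Definition age (t : nat) (i : 'I_n) : nat := (t - last_query q i t)%N.

Lemma last_query_le i t : (last_query q i t <= t)%N.
Proof. by elim: t => //= t IH; case: ifP => // _; apply: leqW. Qed.

Lemma last_query_queried i t :
  (0 < last_query q i t)%N -> q (last_query q i t) = i.
Proof. by elim: t => //= t IH; case: ifP => [/eqP //|_]; apply: IH. Qed.

Lemma last_query_ge i s t :
  (0 < s)%N -> (s <= t)%N -> q s = i -> (s <= last_query q i t)%N.
Proof.
move=> s_gt0; elim: t => [|t IH]; first by case: s s_gt0.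
rewrite leq_eqVlt => /orP [/eqP -> /= -> |]; first by rewrite eqxx.
by rewrite ltnS => st qs /=; case: ifP => _ //; [apply: leqW | apply: IH].
Qed.

Lemma age_gt0 i t : q t.+1 != i -> (0 < age t.+1 i)%N.
Proof.
by move=> /negPf not_i; rewrite /age /= not_i; have := last_query_le i t; lia.
Qed.

(* Objects younger than the current time were queried at distinct times,
   hence have distinct ages. *)
Lemma age_inj i j t : (age t i < t)%N -> age t i = age t j -> i = j.
Proof.
move=> young same_age.
have i_queried : (0 < last_query q i t)%N.
  by move: young; rewrite /age; have := last_query_le i t; lia.
have same_time : last_query q i t = last_query q j t.
  move: same_age young; rewrite /age.
  by have := last_query_le i t; have := last_query_le j t; lia.
rewrite -(last_query_queried i_queried) same_time last_query_queried //.
by rewrite -same_time.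
Qed.

End Ages.

Section DiameterFormula.
Variables (R : realType) (d n : nat) (w v : 'I_n -> R).
Variable p : 'I_n -> R -> 'rV[R]_d.
Hypothesis w_gt0 : forall i, 0 < w i.
Hypothesis v_gt0 : forall i, 0 < v i.

Definition total_weight : R := \sum_i w i.

(* The load at time t: the weighted sum of the radii of the uncertainty
   regions, sum_i w_i v_i age_t(i). *)
Definition load (q : nat -> 'I_n) (t : nat) : R :=
  \sum_i w i * v i * (age q t i)%:R.

Lemma total_weight_ge0 : 0 <= total_weight.
Proof. by apply: sumr_ge0 => i _; apply: ltW. Qed.

Lemma load_ge0 q t : 0 <= load q t.
Proof.
by apply: sumr_ge0 => i _; rewrite !mulr_ge0 ?ler0n ?ltW.
Qed.

Lemma unc_radius q i t :
  v i * (t%:R - (last_query q i t)%:R) = v i * (age q t i)%:R.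
Proof. by rewrite /age natrB ?last_query_le. Qed.

Lemma center_of_massB (X Y : 'I_n -> 'rV[R]_d) :
  center_of_mass w X - center_of_mass w Y =
  total_weight^-1 *: \sum_i w i *: (X i - Y i).
Proof.
rewrite /center_of_mass -scalerBr -sumrB; congr (_ *: _).
by apply: eq_bigr => i _; rewrite scalerBr.
Qed.

(* Triangle inequality: two centers differ by at most (2 / W) load(t). *)
Lemma diam_center_region_le q t :
  (diam (center_region w v p q t) <= (2 / total_weight * load q t)%:E)%E.
Proof.
apply: ge_ereal_sup => z [_ [X X_unc <-] [_ [Y Y_unc <-] <-]].
rewrite lee_fin /Defs.edist center_of_massB enormZ.
rewrite ger0_norm ?invr_ge0 ?total_weight_ge0 // [2 * _]mulrC -mulrA.
rewrite ler_wpM2l ?invr_ge0 ?total_weight_ge0 //.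
apply: le_trans (enorm_sum _) _; rewrite /load mulr_sumr; apply: ler_sum => i _.
rewrite enormZ ger0_norm ?(ltW (w_gt0 i)) // -mulrA mulrCA.
rewrite ler_wpM2l ?(ltW (w_gt0 i)) // -unc_radius mulr_natl mulr2n.
exact: enormB_cball (X_unc i) (Y_unc i).
Qed.

(* Moving every object to the two antipodal points of its ball along a
   fixed unit vector realizes the bound above. *)
Lemma diam_center_region_ge q t : (0 < d)%N ->
  ((2 / total_weight * load q t)%:E <= diam (center_region w v p q t))%E.
Proof.
move=> d_gt0; have [e e_unit] := exists_unit_vector R d_gt0.
pose c i := p i (last_query q i t)%:R.
pose r i := v i * (age q t i)%:R.
have r_ge0 i : 0 <= r i by rewrite mulr_ge0 ?ler0n ?ltW.
pose X i := c i + r i *: e; pose Y i := c i - r i *: e.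
have X_unc i : unc_region v p q i t (X i).
  by rewrite /unc_region /cball /= unc_radius /Defs.edist /X addrC addKr enormZ
    e_unit mulr1 ger0_norm.
have Y_unc i : unc_region v p q i t (Y i).
  by rewrite /unc_region /cball /= unc_radius /Defs.edist /Y addrC addKr enormN
    enormZ e_unit mulr1 ger0_norm.
apply: le_trans (ereal_sup_ubound _); last first.
  exists (center_of_mass w X); first by exists X.
  by exists (center_of_mass w Y); first exists Y.
rewrite lee_fin /Defs.edist center_of_massB.
have -> : \sum_i w i *: (X i - Y i) = (2 * load q t) *: e.
  rewrite /load mulr_sumr scaler_suml; apply: eq_bigr => i _.
  have -> : X i - Y i = (r i + r i) *: e.
    by rewrite /X /Y scalerDl opprB addrCA [c i + _]addrC addrK.
  by rewrite scalerA; congr (_ *: _); rewrite /r; ring.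
rewrite !enormZ e_unit mulr1 ger0_norm ?invr_ge0 ?total_weight_ge0 //.
by rewrite ger0_norm ?mulr_ge0 ?load_ge0 // [2 * _]mulrC -mulrA.
Qed.

Lemma diam_center_region q t : (0 < d)%N ->
  diam (center_region w v p q t) = (2 / total_weight * load q t)%:E.
Proof.
move=> d_gt0; apply/le_anti.
by rewrite diam_center_region_le diam_center_region_ge.
Qed.

Lemma measure_of_ge q t : (0 < d)%N -> (1 <= t)%N ->
  ((2 / total_weight * load q t)%:E <= measure_of w v p q)%E.
Proof.
move=> d_gt0 t_ge1; rewrite -diam_center_region //.
by apply: ereal_sup_ubound; exists t.
Qed.

Lemma measure_of_le q (B : R) :
  (forall t, (1 <= t)%N -> 2 / total_weight * load q t <= B) ->
  (measure_of w v p q <= B%:E)%E.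
Proof.
move=> load_le; apply: ge_ereal_sup => _ [t t_ge1 <-].
by apply: le_trans (diam_center_region_le q t) _; rewrite lee_fin load_le.
Qed.

End DiameterFormula.

Section Tournaments.
Variable I : finType.

Definition tournament (X : rel I) : Prop :=
  irreflexive X /\ forall i j, i != j -> X i j = ~~ X j i.

Definition rank (X : rel I) (i : I) : nat := #|[set j | X j i]|.

Lemma rank_lt_card (X : rel I) i : irreflexive X -> (rank X i < #|I|)%N.
Proof.
move=> X_irr; have before_i : [set j | X j i] \subset [set~ i].
  apply/fintype.subsetP => j; rewrite !inE.
  by apply: contraTneq => ->; rewrite X_irr.
apply: leq_ltn_trans (subset_leq_card before_i) _.
by rewrite cardsC1 ltn_predL; apply/card_gt0P; exists i.
Qed.

Lemma rank_lt (X : rel I) j i : irreflexive X -> transitive X ->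
  X j i -> (rank X j < rank X i)%N.
Proof.
move=> X_irr X_trans ji; apply: proper_card; apply/properP; split.
  by apply/fintype.subsetP => k; rewrite !inE => kj; apply: X_trans ji.
by exists j; rewrite !inE ?ji ?X_irr.
Qed.

Lemma rank_inj (X : rel I) : tournament X -> transitive X -> injective (rank X).
Proof.
move=> [X_irr X_tot] X_trans i j same_rank; apply/eqP/negPn/negP => ij.
have [ij_before|ij_after] := boolP (X i j).
  by have := rank_lt X_irr X_trans ij_before; rewrite same_rank ltnn.
have ji_before : X j i by rewrite X_tot // eq_sym.
by have := rank_lt X_irr X_trans ji_before; rewrite same_rank ltnn.
Qed.

Lemma rank_natr (R : realDomainType) (X : rel I) i :
  (rank X i)%:R = \sum_j ((X j i : nat)%:R : R).
Proof.
rewrite -natr_sum /rank -sum1_card big_mkcond /=; congr _%:R.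
by apply: eq_bigr => j _; rewrite inE; case: (X j i).
Qed.

(* Each pair i, j contributes to both sides, and on a pair where the two
   tournaments disagree, the heavier element is charged less by Y. *)
Lemma tournament_rearrangement (R : realDomainType) (a : I -> R) (X Y : rel I) :
  tournament X -> tournament Y -> (forall i j, Y j i -> a i <= a j) ->
  \sum_i a i * (rank Y i)%:R <= \sum_i a i * (rank X i)%:R.
Proof.
move=> [X_irr X_tot] [Y_irr Y_tot] Y_sorted.
rewrite -subr_ge0 -sumrB.
set D := \sum_i _.
pose g i j : R := a i * ((X j i : nat)%:R - (Y j i : nat)%:R).
have D_def : D = \sum_i \sum_j g i j.
  by apply: eq_bigr => i _; rewrite !rank_natr -mulrBr -sumrB mulr_sumr.
have D2 : D + D = \sum_i \sum_j (g i j + g j i).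
  rewrite {1}D_def {1}D_def [X in _ + X]exchange_big /= -big_split /=.
  by apply: eq_bigr => i _; rewrite -big_split.
suff : 0 <= D + D by rewrite -mulr2n pmulrn_lge0.
rewrite D2; apply: sumr_ge0 => i _; apply: sumr_ge0 => j _; rewrite /g.
have [->|ij] := eqVneq i j; first by rewrite X_irr Y_irr subrr mulr0 addr0.
rewrite (X_tot _ _ ij) (Y_tot _ _ ij).
case Yji: (Y j i); case Xji: (X j i) => /=; rewrite ?subrr ?mulr0 ?addr0 //.
- by have := Y_sorted _ _ Yji; lra.
- have Yij : Y i j by rewrite Y_tot // Yji.
  by have := Y_sorted _ _ Yij; lra.
Qed.

End Tournaments.

Section LexOrder.
Variables (disp : Order.disp_t) (T : orderType disp) (n : nat).
Variable key : 'I_n -> T.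

Definition lex_before : rel 'I_n :=
  fun j i => (key j < key i)%O || ((key j == key i) && (j < i)%N).

Lemma lex_before_tournament : tournament lex_before.
Proof.
split=> [i|i j ij]; first by rewrite /lex_before ltxx ltnn andbF.
rewrite /lex_before; case: (ltgtP (key i) (key j)) => //= _.
by rewrite -leqNgt ltn_neqAle; have -> : (nat_of_ord i != j) = true by [].
Qed.

Lemma lex_before_trans : transitive lex_before.
Proof.
rewrite /lex_before => j k i /orP [kj|/andP [/eqP kj kj']]
  /orP [ji|/andP [/eqP ji ji']].
- by rewrite (lt_trans kj ji).
- by rewrite -ji kj.
- by rewrite kj ji.
- by rewrite kj ji eqxx (ltn_trans kj' ji') orbT.
Qed.

Lemma lex_before_le j i : lex_before j i -> (key j <= key i)%O.
Proof. by case/orP => [/ltW //|/andP [/eqP -> _]]. Qed.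

End LexOrder.

Section LowerBounds.
Variables (R : realType) (n : nat) (w v : 'I_n -> R).
Hypothesis w_gt0 : forall i, 0 < w i.
Hypothesis v_gt0 : forall i, 0 < v i.

(* From time n on, at most age_t(i) objects are strictly younger than i,
   since young objects have pairwise distinct ages. *)
Lemma rank_age_le (q : nat -> 'I_n) t i :
  (n <= t)%N -> (rank (lex_before (age q t)) i <= age q t i)%N.
Proof.
move=> n_le_t.
have rank_lt_n := rank_lt_card i (lex_before_tournament (age q t)).1.
rewrite card_ord in rank_lt_n.
have [old|young] := leqP n.-1 (age q t i); first by apply: leq_trans old; lia.
have i_young : (age q t i < t)%N by lia.
have younger j : lex_before (age q t) j i -> (age q t j < age q t i)%N.
  case/orP => [//|/andP [/eqP same]].
  by rewrite (age_inj i_young (esym same)) ltnn.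
rewrite /rank cardE -(size_map (age q t)) -(size_iota 0 (age q t i)).
apply: uniq_leq_size.
  rewrite map_inj_in_uniq ?enum_uniq // => j k; rewrite !mem_enum !inE.
  by move=> /younger j_young _; apply: age_inj; apply: ltn_trans i_young.
move=> x /mapP [j]; rewrite mem_enum inE => /younger j_young ->.
by rewrite mem_iota.
Qed.

Lemma weighted_age_le_load (q : nat -> 'I_n) t i :
  w i * v i * (age q t i)%:R <= load w v q t.
Proof.
rewrite /load (bigD1 i) //= lerDl; apply: sumr_ge0 => j _.
by rewrite !mulr_ge0 ?ler0n ?ltW.
Qed.

Lemma load_ge_rank_sum (Y : rel 'I_n) (q : nat -> 'I_n) : tournament Y ->
  (forall i j, Y j i -> w i * v i <= w j * v j) ->
  \sum_i w i * v i * (rank Y i)%:R <= load w v q n.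
Proof.
move=> Y_tour Y_sorted.
apply: le_trans (tournament_rearrangement (lex_before_tournament (age q n))
  Y_tour Y_sorted) _.
apply: ler_sum => i _; have a_ge0 : 0 <= w i * v i by rewrite mulr_ge0 ?ltW.
rewrite ler_wpM2l // ler_nat.
exact: rank_age_le.
Qed.

(* Whatever the strategy, the load reaches w_i v_i at some time t >= 1:
   either i is not queried at some time t, or i is always queried and
   some other object ages forever. *)
Lemma load_ge_weight (q : nat -> 'I_n) i : (2 <= n)%N ->
  exists2 t, (1 <= t)%N & w i * v i <= load w v q t.
Proof.
move=> n_ge2; have a_gt0 j : 0 < w j * v j by rewrite mulr_gt0.
have [[s s_ge1 qs]|always_i] :=
  pselect (exists2 s, (1 <= s)%N & q s != i).
  exists s => //; apply: le_trans (weighted_age_le_load q s i).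
  rewrite ler_pMr // ler1n; case: s s_ge1 qs => // s _; exact: age_gt0.
have q_i s : (1 <= s)%N -> q s = i.
  by move=> s_ge1; apply/eqP/negPn/negP => qs; apply: always_i; exists s.
have [j ji] : exists j : 'I_n, j != i.
  pose o0 : 'I_n := Ordinal (ltnW n_ge2); pose o1 : 'I_n := Ordinal n_ge2.
  have [io0|io0] := eqVneq i o0; last by exists o0; rewrite eq_sym.
  by exists o1; rewrite io0.
have never_j t : last_query q j t = 0%N.
  case: (posnP (last_query q j t)) => // queried.
  have := last_query_queried queried; rewrite q_i // => ij.
  by rewrite ij eqxx in ji.
exists (Num.truncn (w i * v i / (w j * v j))).+1 => //.
apply: le_trans (weighted_age_le_load q _ j).
rewrite /age never_j subn0 [w j * v j * _]mulrC -ler_pdivrMr //.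
exact: ltW (truncnS_gt _).
Qed.

End LowerBounds.

Section GroupSchedule.
Variables (n : nat) (r : 'I_n -> nat) (i0 : 'I_n).
Hypothesis r_inj : injective r.
Hypothesis r_lt : forall i, (r i < n)%N.

(* Object i belongs to group floor(log2 (r i + 1)); group k thus holds
   objects of rank in [2^k - 1, 2^(k+1) - 1), and there are
   floor(log2 n) + 1 groups. *)
Definition group_of (i : 'I_n) : nat := trunc_log 2 (r i).+1.
Definition ngroups : nat := (trunc_log 2 n).+1.
Definition group (k : nat) : {set 'I_n} := [set i | group_of i == k].

Definition group_schedule (t : nat) : 'I_n :=
  let u := t.-1 in
  let s := enum (group (u %% ngroups)) in
  nth i0 s ((u %/ ngroups) %% size s).

(* Groups are numbered below ngroups, and group k has at most 2^k members
   since the ranks are distinct. *)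
Lemma group_of_lt i : (group_of i < ngroups)%N.
Proof. by rewrite ltnS; apply: leq_trunc_log; apply: r_lt. Qed.

Lemma pow_group_of i : (2 ^ group_of i <= (r i).+1)%N.
Proof. exact: trunc_logP (ltnSn 1) (ltn0Sn _). Qed.

Lemma card_group k : (#|group k| <= 2 ^ k)%N.
Proof.
rewrite cardE -(size_map r) -(size_iota (2 ^ k).-1 (2 ^ k)).
apply: uniq_leq_size; first by rewrite map_inj_uniq ?enum_uniq.
move=> x /mapP [j]; rewrite mem_enum inE => /eqP jk ->.
have lo := pow_group_of j.
have hi := trunc_log_ltn (r j).+1 (ltnSn 1).
rewrite -/(group_of j) jk expnS in lo hi.
by have := expn_gt0 2 k; rewrite mem_iota; lia.
Qed.

Lemma group_schedule_hit i j :
  let k := group_of i in let s := enum (group k) in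
  group_schedule (k + ngroups * index i s + 1 + j * (ngroups * size s)) = i.
Proof.
move=> k s; have i_in : i \in s by rewrite mem_enum inE.
have idx_lt : (index i s < size s)%N by rewrite index_mem.
have k_lt := group_of_lt i.
rewrite /group_schedule.
have -> : (k + ngroups * index i s + 1 + j * (ngroups * size s)).-1 =
          ((index i s + j * size s) * ngroups + k)%N by rewrite addn1 /=; ring.
rewrite modnMDl (modn_small k_lt) divnMDl // (divn_small k_lt) addn0.
by rewrite addnC modnMDl (modn_small idx_lt) nth_index.
Qed.

Lemma age_group_schedule_group i t :
  (age group_schedule t i <= ngroups * #|group (group_of i)|)%N.
Proof.
set k := group_of i; set s := enum (group k).
have i_in : i \in s by rewrite mem_enum inE.
have idx_lt : (index i s < size s)%N by rewrite index_mem.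
rewrite cardE -/s.
set first := (k + ngroups * index i s + 1)%N.
set period := (ngroups * size s)%N.
have first_le : (first <= period)%N.
  by rewrite /first /period; have := group_of_lt i; nia.
have period_gt0 : (0 < period)%N by rewrite /period; nia.
rewrite /age; have := last_query_le group_schedule i t.
have [early|late] := ltnP t first; first by lia.
set j := ((t - first) %/ period)%N.
have j_le : (j * period <= t - first)%N by apply: leq_divM.
have served : (first + j * period <= last_query group_schedule i t)%N.
  apply: last_query_ge (group_schedule_hit i j);
    by rewrite -/k -/s -/first -/period; lia.
have := ltn_pmod (t - first) period_gt0; have := divn_eq (t - first) period.
by rewrite -/j; lia.
Qed.

Lemma age_group_schedule i t :
  (age group_schedule t i <= ngroups * (r i).+1)%N.
Proof.
apply: leq_trans (age_group_schedule_group i t) _; rewrite leq_mul2l.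
by apply/orP; right; apply: leq_trans (card_group _) (pow_group_of i).
Qed.

End GroupSchedule.

Lemma ngroups_le_log (R : realType) (n : nat) : (2 <= n)%N ->
  3 * (ngroups n)%:R <= 6 / ln 2 * ln n%:R :> R.
Proof.
move=> n_ge2; have ln2_gt0 : (0 : R) < ln 2 by apply: ln_gt0; rewrite ltr1n.
set k := trunc_log 2 n.
have k_ge1 : (1 <= k)%N by rewrite /k trunc_log_gt0.
have pow_k : (2 ^ k <= n)%N by apply: trunc_logP => //; lia.
have k_ln2 : k%:R * ln 2 <= ln n%:R :> R.
  rewrite mulr_natl -lnXn ?ltr0n // -natrX.
  by rewrite ler_ln ?posrE ?ltr0n ?expn_gt0 ?ler_nat //; lia.
have : k%:R <= ln n%:R / ln 2 :> R by rewrite ler_pdivlMr.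
have : 1 <= k%:R :> R by rewrite ler1n.
have -> : 6 / ln 2 * ln n%:R = 6 * (ln n%:R / ln 2) :> R.
  by field; rewrite gt_eqF.
by rewrite /ngroups -/k -natr1; lra.
Qed.

Lemma rank_succ_sum_le (R : realDomainType) (I : finType) (a : I -> R)
    (r : I -> nat) (i1 : I) :
  (forall i, 0 <= a i) -> (forall i, i != i1 -> (0 < r i)%N) ->
  \sum_i a i * (r i).+1%:R <= 2 * \sum_i a i * (r i)%:R + a i1.
Proof.
move=> a_ge0 r_gt0.
have -> : \sum_i a i * (r i).+1%:R = \sum_i a i * (r i)%:R + \sum_i a i.
  by rewrite -big_split; apply: eq_bigr => i _; rewrite -natr1 mulrDr mulr1.
suff : \sum_i a i <= \sum_i a i * (r i)%:R + a i1 by lra.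
rewrite (bigD1 i1) //= addrC lerD //.
rewrite [leRHS](bigD1 i1) //= -[X in X <= _]add0r lerD ?mulr_ge0 //.
apply: ler_sum => i i_neq; rewrite -{1}(mulr1 (a i)) ler_wpM2l //.
by rewrite ler1n r_gt0.
Qed.

Lemma ereal_ge_weighted (R : realType) (M : \bar R) (x y z : R) :
  (x%:E <= M)%E -> (y%:E <= M)%E -> z <= 2 * x + y -> ((z / 3)%:E <= M)%E.
Proof.
case: M => [m||] //; rewrite ?lee_fin ?leey ?leeNy_eq //; lra.
Qed.

Lemma competitive_ratio (R : realType) (M O : \bar R) (x r s : R) :
  0 <= x -> 0 <= r -> r <= s -> (M <= (r * x)%:E)%E -> (x%:E <= O)%E ->
  (M <= s%:E * O)%E.
Proof.
move=> x_ge0 r_ge0 r_le_s M_le x_le_O; rewrite EFinM in M_le.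
apply: le_trans M_le _; apply: le_trans (lee_wpmul2l _ x_le_O) _.
  by rewrite lee_fin.
apply: lee_wpmul2r; last by rewrite lee_fin.
by apply: le_trans x_le_O; rewrite lee_fin.
Qed.

Section Competitive.
Variables (R : realType) (d n : nat) (w v : 'I_n -> R).
Variable p : 'I_n -> R -> 'rV[R]_d.
Hypothesis d_gt0 : (0 < d)%N.
Hypothesis n_ge2 : (2 <= n)%N.
Hypothesis w_gt0 : forall i, 0 < w i.
Hypothesis v_gt0 : forall i, 0 < v i.

Definition by_value : rel 'I_n := lex_before (fun i => - (w i * v i)).

Definition opt_lower_bound : R :=
  2 / total_weight w * (\sum_i w i * v i * (rank by_value i).+1%:R) / 3.

Lemma by_value_sorted i j : by_value j i -> w i * v i <= w j * v j.
Proof. by move/lex_before_le; rewrite lerN2. Qed.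

Lemma value_rank_inj : injective (rank by_value).
Proof.
exact: rank_inj (lex_before_tournament _) (@lex_before_trans _ _ _ _).
Qed.

Lemma value_rank_lt i : (rank by_value i < n)%N.
Proof.
by have := rank_lt_card i (lex_before_tournament (fun i => - (w i * v i))).1;
  rewrite card_ord.
Qed.

Lemma opt_lower_bound_ge0 : 0 <= opt_lower_bound.
Proof.
have K_ge0 : 0 <= \sum_i w i * v i * (rank by_value i).+1%:R.
  by apply: sumr_ge0 => i _; rewrite !mulr_ge0 ?ler0n ?ltW.
by rewrite /opt_lower_bound !mulr_ge0 ?invr_ge0 ?(total_weight_ge0 w_gt0) ?ler0n.
Qed.

(* Every strategy has measure at least opt_lower_bound: combine the load at
   time n with the time at which the load exceeds the weight of the first
   object in value order. *)
Lemma measure_ge_opt_lower_bound q :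
  (opt_lower_bound%:E <= measure_of w v p q)%E.
Proof.
have [i1 _ i1_min] :=
  @arg_minnP _ (Ordinal (ltnW n_ge2)) predT (rank by_value) isT.
have rank_gt0 i : i != i1 -> (0 < rank by_value i)%N.
  move=> i_neq; rewrite lt0n; apply: contra i_neq => /eqP rank0.
  by apply/eqP/value_rank_inj/eqP; rewrite rank0 eq_sym -leqn0 -rank0 i1_min.
have [t t_ge1 weight_le] := load_ge_weight w_gt0 v_gt0 q i1 n_ge2.
apply: ereal_ge_weighted (measure_of_ge p w_gt0 v_gt0 q d_gt0 (ltnW n_ge2))
  (measure_of_ge p w_gt0 v_gt0 q d_gt0 t_ge1) _.
have c_ge0 : 0 <= 2 / total_weight w.
  by rewrite mulr_ge0 ?invr_ge0 ?(total_weight_ge0 w_gt0).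
rewrite mulrCA -mulrDr ler_wpM2l //.
apply: le_trans (rank_succ_sum_le (r := rank by_value) _ rank_gt0) _.
  by move=> i; rewrite mulr_ge0 ?ltW.
apply: lerD weight_le; rewrite ler_wpM2l //.
exact: load_ge_rank_sum (lex_before_tournament _) by_value_sorted.
Qed.

Lemma OPT_ge_lower_bound : (opt_lower_bound%:E <= OPT w v p)%E.
Proof.
by apply: le_ereal_inf_tmp => _ [q _ <-]; apply: measure_ge_opt_lower_bound.
Qed.

Lemma measure_group_schedule_le i0 :
  (measure_of w v p (group_schedule (rank by_value) i0) <=
   (3 * (ngroups n)%:R * opt_lower_bound)%:E)%E.
Proof.
apply: (measure_of_le p w_gt0) => t _; rewrite /opt_lower_bound.
set c := 2 / total_weight w; set K := \sum_i _.
have -> : 3 * (ngroups n)%:R * (c * K / 3) = c * ((ngroups n)%:R * K) by field.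
rewrite ler_wpM2l ?mulr_ge0 ?invr_ge0 ?(total_weight_ge0 w_gt0) //.
rewrite /load /K mulr_sumr; apply: ler_sum => i _.
have a_ge0 : 0 <= w i * v i by rewrite mulr_ge0 ?ltW.
rewrite mulrCA ler_wpM2l // -natrM ler_nat.
exact: age_group_schedule value_rank_inj value_rank_lt i t.
Qed.

End Competitive.

(* Main theorem, with C = 6 / ln 2. *)
Theorem theorem5 (R : realType) :
  exists C : R,
  forall (d n : nat), (0 < d)%N -> (2 <= n)%N ->
  forall (w v : 'I_n -> R), (forall i, 0 < w i) -> (forall i, 0 < v i) ->
  exists q : nat -> 'I_n,
  forall p : 'I_n -> R -> 'rV[R]_d,
    (forall i, speed_bounded (p i) (v i)) ->
    (measure_of w v p q <= (C * ln (n%:R))%:E * OPT w v p)%E.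
Proof.
exists (6 / ln 2) => d n d_gt0 n_ge2 w v w_gt0 v_gt0.
exists (group_schedule (rank (by_value w v)) (Ordinal (ltnW n_ge2))) => p _.
apply: competitive_ratio (measure_group_schedule_le p w_gt0 v_gt0 _)
  (OPT_ge_lower_bound p d_gt0 n_ge2 w_gt0 v_gt0).
- exact: opt_lower_bound_ge0.
- by rewrite mulr_ge0 ?ler0n.
- exact: ngroups_le_log.
Qed.
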